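(* Let $\theta,w\in\mathbb{R}^p$ and $\eta=\theta+w$, and for $c\in\mathbb{R}$ let $\eta(c)=\bar\eta+c(\eta-\bar\eta)$. Assume $\mathrm{var}(\eta)>0$, $\bar\theta\neq0$ and $\bar\eta\neq0$. Then the minimizer over $c\in\mathbb{R}$ of $\mathrm{MSE}(\eta(c),\theta)$ is $$c^{\mathrm{MSE}}=\frac{\mathrm{cov}(\theta,\eta)}{\mathrm{var}(\eta)},$$ and the minimizer over $c\in\mathbb{R}$ of $\mathrm{SPH}(\eta(c),\theta)$ is $$c^{\mathrm{SPH}}=\frac{\bar\eta}{\bar\theta}\,c^{\mathrm{MSE}}.$$
   Context: For $u,v\in\mathbb{R}^p$: $\bar u=\frac1p\sum_i u_i$, $\mathrm{var}(u)=\frac1p\sum_i(u_i-\bar u)^2$, $\mathrm{cov}(u,v)=\frac1p\sum_i(u_i-\bar u)(v_i-\bar v)$; for $x\in\mathbb{R}$, $u-x$ and $x+u$ are componentwise. $\mathrm{MSE}(u,\theta)=\langle u-\theta,u-\theta\rangle/p$, and for nonzero $u,\theta$, $\mathrm{SPH}(u,\theta)=1-\left(\frac{\langle u,\theta\rangle}{|u||\theta|}\right)^2$. *)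

From mathcomp Require Import all_boot all_order all_algebra.
Set Implicit Arguments. Unset Strict Implicit. Unset Printing Implicit Defensive.
Import Order.TTheory GRing.Theory Num.Theory.
Local Open Scope ring_scope.

Section Defs.
Variables (R : rcfType) (p : nat).
Definition vec := 'I_p -> R.

Definition mean (u : vec) : R := (\sum_(i < p) u i) / p%:R.
Definition var (u : vec) : R := (\sum_(i < p) (u i - mean u) ^+ 2) / p%:R.
Definition cov (u v : vec) : R :=
  (\sum_(i < p) (u i - mean u) * (v i - mean v)) / p%:R.
Definition dotp (u v : vec) : R := \sum_(i < p) u i * v i.
Definition vnorm (u : vec) : R := Num.sqrt (dotp u u).
Definition MSE (u theta : vec) : R :=
  dotp (fun i => u i - theta i) (fun i => u i - theta i) / p%:R.
Definition SPH (u theta : vec) : R :=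
  1 - (dotp u theta / (vnorm u * vnorm theta)) ^+ 2.
Definition shrink (eta : vec) (c : R) : vec :=
  fun i => mean eta + c * (eta i - mean eta).
End Defs.

(** Put d = eta - mean eta.  As d sums to 0, <eta(c), theta> and |eta(c)|^2 equal
    p (mean eta * mean theta + c cov(theta, eta)) and p (mean eta^2 + c^2 var eta).
    Hence MSE(eta(c), theta) is a quadratic in c with leading coefficient var eta,
    and SPH(eta(c), theta) = 1 - p (mean eta * mean theta + c cov)^2 /
    ((mean eta^2 + c^2 var eta) |theta|^2).  In both cases f(c) - f(c0) is a
    positive multiple of (c - c0)^2, so c0 is the unique minimiser. *)
From mathcomp Require Import all_boot all_order all_algebra.
From mathcomp Require Import ring.
Set Implicit Arguments. Unset Strict Implicit. Unset Printing Implicit Defensive.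
Import Order.TTheory GRing.Theory Num.Theory.
Local Open Scope ring_scope.

Lemma sqr_gap_unique_argmin (R : realDomainType) (f k : R -> R) (c0 : R) :
  (forall c, 0 < k c) -> (forall c, f c = f c0 + k c * (c - c0) ^+ 2) ->
  (forall c, f c0 <= f c) /\ (forall c, (forall c', f c <= f c') -> c = c0).
Proof.
move=> k_gt0 fE; split=> [c | c c_min].
  by rewrite [f c]fE lerDl mulr_ge0 ?sqr_ge0 ?ltW.
have := c_min c0; rewrite [f c]fE gerDl pmulr_rle0 // => sqr_le0.
by apply/eqP; rewrite -subr_eq0 -sqrf_eq0 eq_le sqr_le0 sqr_ge0.
Qed.

Section InnerProducts.
Variables (R : rcfType) (p : nat).
Implicit Types u v eta theta : vec R p.

Lemma dotp_self_ge0 u : 0 <= dotp u u.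
Proof. by apply: sumr_ge0 => i _; rewrite -expr2 sqr_ge0. Qed.

Lemma dotp_self_gt0 u : mean u != 0 -> 0 < dotp u u.
Proof.
rewrite lt_def dotp_self_ge0 andbT; apply: contraNneq => uu0.
have u0 i : u i = 0.
  apply/eqP; rewrite -sqrf_eq0 expr2; apply/eqP.
  by apply: (psumr_eq0P _ uu0) => // j _; rewrite -expr2 sqr_ge0.
by rewrite /mean big1 ?mul0r.
Qed.

Lemma MSE_dotp u theta :
  MSE u theta = (dotp u u - 2 * dotp u theta + dotp theta theta) / p%:R.
Proof.
rewrite /MSE /dotp mulr_sumr -sumrB -big_split /=; congr (_ / _).
by apply: eq_bigr => i _; ring.
Qed.

Lemma SPH_dotp u theta :
  SPH u theta = 1 - dotp u theta ^+ 2 / (dotp u u * dotp theta theta).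
Proof. by rewrite /SPH /vnorm expr_div_n exprMn !sqr_sqrtr ?dotp_self_ge0. Qed.

Lemma var_gt0_dim u : 0 < var u -> (0 < p)%N.
Proof.
rewrite lt0n -(pnatr_eq0 R); apply: contraTN => /eqP p0.
by rewrite /var p0 invr0 mulr0 ltxx.
Qed.

Hypothesis p_gt0 : (0 < p)%N.

Let pR_neq0 : p%:R != 0 :> R.
Proof. by rewrite pnatr_eq0 -lt0n. Qed.

Lemma sum_mean u : \sum_(i < p) u i = p%:R * mean u.
Proof. by rewrite /mean mulrC divfK. Qed.

Lemma sum_centered u : \sum_(i < p) (u i - mean u) = 0.
Proof. by rewrite sumrB sumr_const card_ord sum_mean mulr_natl subrr. Qed.

Lemma sum_centered_sqr u : \sum_(i < p) (u i - mean u) ^+ 2 = p%:R * var u.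
Proof. by rewrite /var mulrC divfK. Qed.

Lemma sum_mul_centered u v :
  \sum_(i < p) u i * (v i - mean v) = p%:R * cov u v.
Proof.
rewrite /cov mulrC divfK //; under [RHS]eq_bigr do rewrite mulrBl.
by rewrite sumrB -mulr_sumr sum_centered mulr0 subr0.
Qed.

Lemma dotp_shrink eta theta c :
  dotp (shrink eta c) theta = p%:R * (mean eta * mean theta + c * cov theta eta).
Proof.
rewrite /dotp /shrink (eq_bigr (fun i =>
  mean eta * theta i + c * (theta i * (eta i - mean eta)))) => [|i _]; last by ring.
by rewrite big_split /= -!mulr_sumr sum_mean sum_mul_centered; ring.
Qed.

Lemma dotp_shrink_self eta c :
  dotp (shrink eta c) (shrink eta c) = p%:R * (mean eta ^+ 2 + c ^+ 2 * var eta).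
Proof.
rewrite /dotp /shrink (eq_bigr (fun i => mean eta ^+ 2 +
  (2 * c * mean eta * (eta i - mean eta) + c ^+ 2 * (eta i - mean eta) ^+ 2)))
  => [|i _]; last by ring.
rewrite !big_split /= sumr_const card_ord -mulr_natl -!mulr_sumr.
by rewrite sum_centered sum_centered_sqr; ring.
Qed.

End InnerProducts.

Section Shrinkage.
Variables (R : rcfType) (p : nat) (eta theta : vec R p).
Hypothesis var_gt0 : 0 < var eta.

Local Notation cMSE := (cov theta eta / var eta).
Local Notation cSPH := (mean eta / mean theta * cMSE).

Let p_gt0 : (0 < p)%N := var_gt0_dim var_gt0.
Let pR_neq0 : p%:R != 0 :> R.
Proof. by rewrite pnatr_eq0 -lt0n. Qed.
Let var_neq0 : var eta != 0. Proof. by rewrite gt_eqF. Qed.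

Lemma MSE_shrink c :
  MSE (shrink eta c) theta = MSE (shrink eta cMSE) theta + var eta * (c - cMSE) ^+ 2.
Proof.
by rewrite !MSE_dotp !dotp_shrink_self // !dotp_shrink //; field; apply/andP.
Qed.

Hypotheses (mean_theta_neq0 : mean theta != 0) (mean_eta_neq0 : mean eta != 0).

Let mean_eta_sqr_gt0 : 0 < mean eta ^+ 2.
Proof. by rewrite exprn_even_gt0 //= mean_eta_neq0. Qed.
Let mean_theta_sqr_gt0 : 0 < mean theta ^+ 2.
Proof. by rewrite exprn_even_gt0 //= mean_theta_neq0. Qed.

Let shrink_norm_gt0 c : 0 < mean eta ^+ 2 + c ^+ 2 * var eta.
Proof. by rewrite ltr_pwDl // mulr_ge0 ?sqr_ge0 ?ltW. Qed.

Lemma SPH_shrink_coef_gt0 c :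
  0 < p%:R * var eta * mean theta ^+ 2 /
      ((mean eta ^+ 2 + c ^+ 2 * var eta) * dotp theta theta).
Proof.
have pR_gt0 : 0 < p%:R :> R by rewrite ltr0n.
apply: divr_gt0; first exact: mulr_gt0 (mulr_gt0 pR_gt0 var_gt0) mean_theta_sqr_gt0.
exact: mulr_gt0 (shrink_norm_gt0 c) (dotp_self_gt0 mean_theta_neq0).
Qed.

Lemma SPH_shrink c :
  SPH (shrink eta c) theta = SPH (shrink eta cSPH) theta +
    p%:R * var eta * mean theta ^+ 2 /
      ((mean eta ^+ 2 + c ^+ 2 * var eta) * dotp theta theta) * (c - cSPH) ^+ 2.
Proof.
have cSPH_norm_gt0 : 0 < mean eta ^+ 2 * (mean theta ^+ 2 * var eta) +
                        (mean eta * cov theta eta) ^+ 2.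
  exact: ltr_pwDl (mulr_gt0 mean_eta_sqr_gt0 (mulr_gt0 mean_theta_sqr_gt0 var_gt0))
                 (sqr_ge0 _).
have theta_norm_gt0 := dotp_self_gt0 mean_theta_neq0.
rewrite !SPH_dotp !dotp_shrink_self // !dotp_shrink //; field.
by rewrite var_neq0 mean_theta_neq0 pR_neq0 !gt_eqF ?shrink_norm_gt0.
Qed.

End Shrinkage.

Theorem lemma1 (R : rcfType) (p : nat) (theta w : 'I_p -> R) :
  let eta := fun i => theta i + w i in
  0 < var eta -> mean theta != 0 -> mean eta != 0 ->
  let cMSE := cov theta eta / var eta in
  let cSPH := mean eta / mean theta * cMSE in
  ((forall c : R, MSE (shrink eta cMSE) theta <= MSE (shrink eta c) theta) /\
   (forall c : R, (forall c' : R, MSE (shrink eta c) theta <= MSE (shrink eta c') theta) ->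
      c = cMSE)) /\
  ((forall c : R, SPH (shrink eta cSPH) theta <= SPH (shrink eta c) theta) /\
   (forall c : R, (forall c' : R, SPH (shrink eta c) theta <= SPH (shrink eta c') theta) ->
      c = cSPH)).
Proof.
move=> eta var_gt0 mean_theta_neq0 mean_eta_neq0 cMSE cSPH; split.
- exact: (sqr_gap_unique_argmin (fun=> var_gt0) (MSE_shrink theta var_gt0)).
- exact: (sqr_gap_unique_argmin (SPH_shrink_coef_gt0 var_gt0 mean_theta_neq0 mean_eta_neq0)
                                (SPH_shrink var_gt0 mean_theta_neq0 mean_eta_neq0)).
Qed.
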